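(* Let $A_1,\dots,A_{12}$ be the vertices of a regular icosahedron in $\mathbb R^3$ with centre $O$, and let $\Gamma$ be a sphere centred at $O$. If $\lambda\in\mathbb R$ is such that $M\mapsto\sum_{i=1}^{12}|MA_i|^{\lambda}$ is constant on $\Gamma\setminus\{A_1,\dots,A_{12}\}$, then $\lambda\in\{0,2,4,6,8,10\}$.
   Context: $|MA|$ denotes Euclidean distance. *)

From Stdlib Require Import Reals Lra.
Open Scope R_scope.

Definition point := (R * R * R)%type.

Definition mkpt (x y z : R) : point := (x, y, z).

Definition dist3 (P Q : point) : R :=
  let '(x1, y1, z1) := P in
  let '(x2, y2, z2) := Q in
  sqrt ((x1 - x2)^2 + (y1 - y2)^2 + (z1 - z2)^2).

Definition origin : point := (0, 0, 0).

Definition phi : R := (1 + sqrt 5) / 2.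

(* The 12 vertices of the standard regular icosahedron centred at the origin:
   cyclic permutations of (0, +-1, +-phi). Indices 0..11. *)
Definition std_vertex (j : nat) : point :=
  match j with
  | 0 => mkpt 0 1 phi
  | 1 => mkpt 0 1 (- phi)
  | 2 => mkpt 0 (-1) phi
  | 3 => mkpt 0 (-1) (- phi)
  | 4 => mkpt 1 phi 0
  | 5 => mkpt 1 (- phi) 0
  | 6 => mkpt (-1) phi 0
  | 7 => mkpt (-1) (- phi) 0
  | 8 => mkpt phi 0 1
  | 9 => mkpt phi 0 (-1)
  | 10 => mkpt (- phi) 0 1
  | _ => mkpt (- phi) 0 (-1)
  end.

Definition similarity (T : point -> point) (c : R) : Prop :=
  0 < c /\ forall P Q, dist3 (T P) (T Q) = c * dist3 P Q.

(* A (indices 0..11) lists the 12 distinct vertices of a regular icosahedron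
   with centre O: it is the image of the standard icosahedron under a
   similarity sending the origin (its centre) to O. *)
Definition regular_icosahedron (A : nat -> point) (O : point) : Prop :=
  exists (T : point -> point) (c : R),
    similarity T c /\ T origin = O /\
    (forall i, (i < 12)%nat -> exists j, (j < 12)%nat /\ A i = T (std_vertex j)) /\
    (forall i k, (i < 12)%nat -> (k < 12)%nat -> A i = A k -> i = k).

(* M |-> sum_{i=1}^{12} |M A_i|^lambda  (indices shifted to 0..11) *)
Definition vertex_power_sum (A : nat -> point) (lam : R) (M : point) : R :=
  sum_f_R0 (fun i => Rpower (dist3 M (A i)) lam) 11.

From Stdlib Require Import Reals Lra Lia List Permutation ClassicalEpsilon Nsatz.
From Coquelicot Require Import Coquelicot.
Open Scope R_scope.

(** A similarity reduces to the standard icosahedron (vertices the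
    cyclic permutations of [(0, +-1, +-phi)]) and a sphere of radius [w] about
    the origin.  Compare the power sum at two points of this sphere: the point
    [t A_0] on the ray through a vertex ([t = w / circumradius]) and the pole
    [(0, 0, w)] above an edge midpoint.  Their squared distances to the
    vertices take nine values [X_0 < ... < X_8], so the difference of the two
    power sums is the exponential sum [sum_k c_k exp (lam ln (sqrt X_k))],
    with coefficients [(1, -2, -2, 5, -4, 5, -2, -2, 1)]: six sign changes.
    By Descartes' rule of signs for exponential sums (proved below by
    induction with Rolle's theorem) it has at most six real zeros; since the
    icosahedron is a spherical 5-design it vanishes at [0, 2, ..., 10], hence
    nowhere else.  On the circumsphere ([t = 1]) the ray point is a vertex:
    approaching it along the sphere shows [lam >= 0] and, for [lam > 0],
    identifies the constant with the sum over the eleven other vertices; the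
    remaining exponential sum has five sign changes and the roots
    [2, ..., 10]. *)

Definition increasing_upto (z : nat -> R) (m : nat) : Prop :=
  forall j, (j < m)%nat -> z j < z (S j).

Lemma increasing_upto_lt (z : nat -> R) m :
  increasing_upto z m -> forall i j, (i < j)%nat -> (j <= m)%nat -> z i < z j.
Proof.
  intros H i j hij hj. induction j as [|j IH]; [lia|].
  destruct (Nat.eq_dec i j) as [->|hne]; [apply H; lia|].
  pose proof (H j ltac:(lia)). specialize (IH ltac:(lia) ltac:(lia)). lra.
Qed.

Definition exp_sum (c a : nat -> R) (n : nat) (x : R) : R :=
  sum_f_R0 (fun i => c i * exp (a i * x)) n.

Fixpoint sign_changes (c : nat -> R) (n : nat) : nat :=
  match n with
  | O => O
  | S m => (sign_changes c m + if Rlt_dec (c m * c (S m)) 0 then 1 else 0)%nat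
  end.

Lemma sign_change_exists c n :
  (0 < sign_changes c n)%nat -> exists k, (k < n)%nat /\ c k * c (S k) < 0.
Proof.
  induction n as [|n IH]; simpl; [lia|].
  destruct (Rlt_dec (c n * c (S n)) 0) as [h|h]; intros H.
  - exists n; split; [lia|exact h].
  - destruct IH as [k [hk1 hk2]]; [lia|]. exists k; split; [lia|exact hk2].
Qed.

Lemma sign_changes_ext c c' n :
  (forall i, (i < n)%nat -> (c i * c (S i) < 0 <-> c' i * c' (S i) < 0)) ->
  sign_changes c n = sign_changes c' n.
Proof.
  induction n as [|n IH]; simpl; intros H; [reflexivity|].
  rewrite IH by (intros; apply H; lia).
  destruct (Rlt_dec (c n * c (S n)) 0) as [h|h];
  destruct (Rlt_dec (c' n * c' (S n)) 0) as [h'|h']; try reflexivity;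
  exfalso; [apply h'|apply h]; apply (H n); auto; lia.
Qed.

Lemma sign_changes_one_less c c' n k :
  (k < n)%nat -> c k * c (S k) < 0 -> ~ (c' k * c' (S k) < 0) ->
  (forall i, (i < n)%nat -> i <> k -> (c i * c (S i) < 0 <-> c' i * c' (S i) < 0)) ->
  sign_changes c n = S (sign_changes c' n).
Proof.
  induction n as [|n IH]; intros Hk H1 H2 H; [lia|]. simpl.
  destruct (Nat.eq_dec k n) as [->|hne].
  - rewrite (sign_changes_ext c c' n) by (intros; apply H; lia).
    destruct (Rlt_dec (c n * c (S n)) 0); [|contradiction].
    destruct (Rlt_dec (c' n * c' (S n)) 0); [contradiction|]. lia.
  - rewrite IH by (auto; try lia; intros; apply H; lia).
    destruct (Rlt_dec (c n * c (S n)) 0) as [h|h];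
    destruct (Rlt_dec (c' n * c' (S n)) 0) as [h'|h']; try lia;
    exfalso; [apply h'|apply h]; apply (H n); auto; lia.
Qed.

Lemma sign_changes_weighted c d n k :
  (k < n)%nat -> c k * c (S k) < 0 ->
  (forall i, (i <= k)%nat -> d i < 0) ->
  (forall i, (k < i <= n)%nat -> 0 < d i) ->
  sign_changes c n = S (sign_changes (fun i => c i * d i) n).
Proof.
  intros Hk Hck Hneg Hpos. apply (sign_changes_one_less c _ n k Hk Hck).
  - pose proof (Hneg k (le_n _)). pose proof (Hpos (S k) ltac:(lia)).
    intro h. assert (c k * c (S k) * (d k * d (S k)) < 0) by nra.
    assert (d k * d (S k) < 0) by nra. nra.
  - intros i hi hik.
    assert (Hd : 0 < d i * d (S i)).
    { destruct (Compare_dec.le_lt_dec (S i) k).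
      - pose proof (Hneg i ltac:(lia)). pose proof (Hneg (S i) ltac:(lia)). nra.
      - pose proof (Hpos i ltac:(lia)). pose proof (Hpos (S i) ltac:(lia)). nra. }
    replace (c i * d i * (c (S i) * d (S i))) with (c i * c (S i) * (d i * d (S i))) by ring.
    split; intro h; nra.
Qed.

Lemma no_sign_change_same_sign c n :
  sign_changes c n = 0%nat -> (forall i, (i <= n)%nat -> c i <> 0) ->
  forall i, (i <= n)%nat -> 0 < c 0%nat * c i.
Proof.
  induction n as [|n IH]; intros H0 Hnz i Hi.
  - replace i with 0%nat by lia. pose proof (Rsqr_pos_lt _ (Hnz 0%nat (le_n _))).
    unfold Rsqr in *. lra.
  - simpl in H0. destruct (Rlt_dec (c n * c (S n)) 0) as [h|h]; [lia|].
    assert (Hs : sign_changes c n = 0%nat) by lia.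
    destruct (Nat.eq_dec i (S n)) as [->|hne];
      [|apply IH; [exact Hs| intros j hj; apply Hnz; lia | lia]].
    pose proof (IH Hs (fun j hj => Hnz j ltac:(lia)) n (le_n _)) as H0n.
    pose proof (Rsqr_pos_lt _ (Hnz n ltac:(lia))) as Hn2. unfold Rsqr in Hn2.
    assert (Hstep : 0 < c n * c (S n)).
    { destruct (Rle_lt_or_eq_dec _ _ (Rnot_lt_le _ _ h)) as [|E]; [lra|].
      symmetry in E. apply Rmult_integral in E.
      destruct E; exfalso; [apply (Hnz n)|apply (Hnz (S n))]; auto; lia. }
    assert (0 < (c 0%nat * c n) * (c n * c (S n))) by (apply Rmult_lt_0_compat; auto).
    nra.
Qed.

Lemma exp_sum_scal k c a n x : k * exp_sum c a n x = exp_sum (fun i => k * c i) a n x.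
Proof.
  unfold exp_sum; induction n as [|n IH]; simpl; [ring|]. rewrite <- IH; ring.
Qed.

Lemma exp_sum_no_root c a n x :
  sign_changes c n = 0%nat -> (forall i, (i <= n)%nat -> c i <> 0) ->
  exp_sum c a n x <> 0.
Proof.
  intros H0 Hnz Hf.
  assert (Hpos : 0 < c 0%nat * exp_sum c a n x).
  { rewrite exp_sum_scal. apply tech1. intros i Hi.
    apply Rmult_lt_0_compat; [apply (no_sign_change_same_sign c n)|apply exp_pos]; auto. }
  rewrite Hf in Hpos. lra.
Qed.

Lemma exp_sum_derive c a n x :
  derivable_pt_lim (exp_sum c a n) x (exp_sum (fun i => c i * a i) a n x).
Proof.
  apply is_derive_Reals. unfold exp_sum. induction n as [|n IH]; simpl.
  - auto_derive; auto. ring.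
  - apply (is_derive_plus (fun x => sum_f_R0 (fun i => c i * exp (a i * x)) n)
        (fun x => c (S n) * exp (a (S n) * x))); auto.
    auto_derive; auto. ring.
Qed.

Lemma exp_sum_shift c a n b x :
  exp_sum c a n x = exp (b * x) * exp_sum c (fun i => a i - b) n x.
Proof.
  unfold exp_sum; induction n as [|n IH]; simpl.
  - replace (a 0%nat * x) with (b * x + (a 0%nat - b) * x) by ring. rewrite exp_plus. ring.
  - rewrite IH, Rmult_plus_distr_l. f_equal.
    replace (a (S n) * x) with (b * x + (a (S n) - b) * x) by ring. rewrite exp_plus. ring.
Qed.

Lemma rolle_interlace (f f' : R -> R) m (z : nat -> R) :
  (forall x, derivable_pt_lim f x (f' x)) ->
  increasing_upto z (S m) -> (forall j, (j <= S m)%nat -> f (z j) = 0) ->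
  exists w, increasing_upto w m /\ forall j, (j <= m)%nat -> f' (w j) = 0.
Proof.
  intros Hd Hz Hzero.
  assert (Hw : forall j, {w | (j <= m)%nat -> z j < w < z (S j) /\ f' w = 0}).
  { intro j. apply constructive_indefinite_description.
    destruct (Compare_dec.le_lt_dec j m) as [hj|hj]; [|exists 0; intro; lia].
    assert (Hlt : z j < z (S j)) by (apply Hz; lia).
    destruct (MVT_cor2 f f' (z j) (z (S j)) Hlt (fun x _ => Hd x)) as [w [Hmvt Hin]].
    exists w. intros _. split; [exact Hin|].
    rewrite !Hzero in Hmvt by lia. nra. }
  exists (fun j => proj1_sig (Hw j)). split.
  - intros j hj. destruct (Hw j) as [x hx], (Hw (S j)) as [y hy]; simpl.
    destruct (hx ltac:(lia)) as [[_ h1] _], (hy ltac:(lia)) as [[h2 _] _]. lra.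
  - intros j hj. destruct (Hw j) as [x hx]; simpl. apply hx; exact hj.
Qed.

(** Induction on [V]: shift the exponents so that the sign change at
    [k] separates negative from positive exponents; differentiating then
    removes that sign change, and Rolle loses at most one zero. *)
Theorem exp_sum_root_bound V : forall n c a m z,
  increasing_upto a n -> (forall i, (i <= n)%nat -> c i <> 0) ->
  sign_changes c n = V ->
  increasing_upto z m -> (forall j, (j <= m)%nat -> exp_sum c a n (z j) = 0) ->
  (m < V)%nat.
Proof.
  induction V as [|V IH]; intros n c a m z Ha Hc HV Hz Hzero.
  { exfalso. apply (exp_sum_no_root c a n (z 0%nat) HV Hc), Hzero. lia. }
  destruct (sign_change_exists c n) as [k [Hk Hck]]; [lia|].
  set (b := (a k + a (S k)) / 2).
  set (a' := fun i => a i - b).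
  assert (Hak : a k < a (S k)) by (apply Ha; lia).
  assert (Hlo : forall i, (i <= k)%nat -> a' i < 0).
  { intros i hi. unfold a', b. destruct (Nat.eq_dec i k) as [->|]; [lra|].
    pose proof (increasing_upto_lt a n Ha i k ltac:(lia) ltac:(lia)). lra. }
  assert (Hhi : forall i, (k < i <= n)%nat -> 0 < a' i).
  { intros i hi. unfold a', b. destruct (Nat.eq_dec i (S k)) as [->|]; [lra|].
    pose proof (increasing_upto_lt a n Ha (S k) i ltac:(lia) ltac:(lia)). lra. }
  assert (Hdrop := sign_changes_weighted c a' n k Hk Hck Hlo Hhi).
  destruct m as [|m]; [lia|].
  assert (Hzero' : forall j, (j <= S m)%nat -> exp_sum c a' n (z j) = 0).
  { intros j hj. specialize (Hzero j hj). rewrite (exp_sum_shift c a n b) in Hzero.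
    pose proof (exp_pos (b * z j)). unfold a'. nra. }
  destruct (rolle_interlace _ _ m z (exp_sum_derive c a' n) Hz Hzero') as [w [Hw Hw0]].
  enough (m < V)%nat by lia.
  apply (IH n (fun i => c i * a' i) a' m w); [| |lia|exact Hw|exact Hw0].
  - intros i hi. unfold a'. pose proof (Ha i hi). lra.
  - intros i hi. apply Rmult_integral_contrapositive. split; [apply Hc; auto|].
    destruct (Compare_dec.le_lt_dec i k).
    + specialize (Hlo i l). lra.
    + specialize (Hhi i ltac:(lia)). lra.
Qed.

Lemma insert_point (Z : R -> Prop) x : forall m z,
  increasing_upto z m -> (forall j, (j <= m)%nat -> Z (z j)) ->
  Z x -> (forall j, (j <= m)%nat -> x <> z j) ->
  exists z', increasing_upto z' (S m) /\ (forall j, (j <= S m)%nat -> Z (z' j)) /\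
    z' 0%nat = Rmin x (z 0%nat).
Proof.
  intros m. induction m as [|m IH]; intros z Hz HZ Zx Hx.
  all: destruct (Rlt_le_dec x (z 0%nat)) as [Hlt|Hle].
  1, 3: exists (fun j => match j with O => x | S j => z j end);
    split; [|split; [|rewrite Rmin_left by lra; reflexivity]];
    [intros [|j] hj; [exact Hlt|apply Hz; lia] | intros [|j] hj; [exact Zx|apply HZ; lia]].
  - assert (Hlt : z 0%nat < x) by (pose proof (Hx 0%nat (le_n _)); lra).
    exists (fun j => match j with O => z 0%nat | _ => x end).
    split; [intros [|j] hj; [exact Hlt|lia]|split; [|rewrite Rmin_right by lra; reflexivity]].
    intros [|j] hj; [apply HZ; lia|exact Zx].
  - assert (Hlt : z 0%nat < x) by (pose proof (Hx 0%nat ltac:(lia)); lra).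
    destruct (IH (fun j => z (S j))) as [z' [Hz' [HZ' Hz'0]]];
      [intros j hj; apply Hz; lia|intros j hj; apply HZ; lia|exact Zx|intros j hj; apply Hx; lia|].
    exists (fun j => match j with O => z 0%nat | S j => z' j end).
    split; [|split; [|rewrite Rmin_right by lra; reflexivity]].
    + intros [|j] hj; [|apply Hz'; lia].
      rewrite Hz'0. pose proof (Hz 0%nat ltac:(lia)). apply Rmin_glb_lt; lra.
    + intros [|j] hj; [apply HZ; lia|apply HZ'; lia].
Qed.

Corollary exp_sum_roots_exhausted n c a m z x :
  increasing_upto a n -> (forall i, (i <= n)%nat -> c i <> 0) ->
  sign_changes c n = S m ->
  increasing_upto z m -> (forall j, (j <= m)%nat -> exp_sum c a n (z j) = 0) ->
  exp_sum c a n x = 0 -> exists j, (j <= m)%nat /\ x = z j.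
Proof.
  intros Ha Hc HV Hz Hzero Hx.
  destruct (classic (exists j, (j <= m)%nat /\ x = z j)) as [|Hnew]; [assumption|].
  exfalso.
  destruct (insert_point (fun y => exp_sum c a n y = 0) x m z Hz Hzero Hx)
    as [z' [Hz' [Hzero' _]]].
  { intros j hj E. apply Hnew. exists j. auto. }
  pose proof (exp_sum_root_bound (S m) n c a (S m) z' Ha Hc HV Hz' Hzero'). lia.
Qed.

Lemma sum_f_R0_as_list (h : nat -> R) n :
  sum_f_R0 h n = fold_right Rplus 0 (map h (seq 0 (S n))).
Proof.
  assert (Hinit : forall l x, fold_right Rplus x l = fold_right Rplus 0 l + x)
    by (induction l as [|y l IHl]; intros x; simpl; [ring|rewrite IHl; ring]).
  induction n as [|n IH]; [simpl; ring|].
  rewrite (seq_S (S n) 0), map_app, fold_right_app, Hinit, <- IH. simpl. ring.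
Qed.

Lemma sum_f_R0_perm (h : nat -> R) (s : nat -> nat) n :
  (forall i, (i <= n)%nat -> (s i <= n)%nat) ->
  (forall i k, (i <= n)%nat -> (k <= n)%nat -> s i = s k -> i = k) ->
  sum_f_R0 (fun i => h (s i)) n = sum_f_R0 h n.
Proof.
  intros Hrange Hinj. rewrite !sum_f_R0_as_list, <- (map_map s h).
  assert (Hperm : Permutation (map s (seq 0 (S n))) (seq 0 (S n))).
  { apply Permutation_map_same_l.
    - apply FinFun.Injective_map_NoDup_in; [|apply seq_NoDup].
      intros x y hx hy. apply in_seq in hx, hy. apply Hinj; lia.
    - intros x hx. apply in_map_iff in hx. destruct hx as [y [<- hy]].
      apply in_seq in hy. apply in_seq. specialize (Hrange y ltac:(lia)). lia. }
  induction (Permutation_map h Hperm); simpl; lra.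
Qed.

Definition std_power_sum (lam : R) (P : point) : R :=
  sum_f_R0 (fun j => Rpower (dist3 P (std_vertex j)) lam) 11.

Definition off_vertices (P : point) : Prop :=
  forall j, (j < 12)%nat -> 0 < dist3 P (std_vertex j).

Lemma dist3_refl P : dist3 P P = 0.
Proof.
  destruct P as [[x y] z]. unfold dist3.
  replace ((x - x) ^ 2 + (y - y) ^ 2 + (z - z) ^ 2) with 0 by ring. apply sqrt_0.
Qed.

Lemma icosahedron_reindex (A : nat -> point) (T : point -> point) :
  (forall i, (i < 12)%nat -> exists j, (j < 12)%nat /\ A i = T (std_vertex j)) ->
  exists s : nat -> nat, forall i, (i < 12)%nat -> (s i < 12)%nat /\ A i = T (std_vertex (s i)).
Proof.
  intros Hv.
  assert (Hs : forall i, {j | (i < 12)%nat -> (j < 12)%nat /\ A i = T (std_vertex j)}).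
  { intro i. apply constructive_indefinite_description.
    destruct (Compare_dec.lt_dec i 12) as [h|h]; [|exists 0%nat; intro; contradiction].
    destruct (Hv i h) as [j hj]. exists j. auto. }
  exists (fun i => proj1_sig (Hs i)). intros i hi. destruct (Hs i) as [j hj]. auto.
Qed.

Lemma reduce_to_standard A O : regular_icosahedron A O ->
  exists (T : point -> point) (c : R),
    0 < c /\ (forall P Q, dist3 (T P) (T Q) = c * dist3 P Q) /\ T origin = O /\
    forall P lam, off_vertices P ->
      (forall i, (i < 12)%nat -> T P <> A i) /\
      vertex_power_sum A lam (T P) = Rpower c lam * std_power_sum lam P.
Proof.
  intros [T [c [[Hc Hsim] [HO [Hv Hinj]]]]].
  exists T, c. split; [exact Hc|split; [exact Hsim|split; [exact HO|]]].
  destruct (icosahedron_reindex A T Hv) as [s Hs].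
  intros P lam HP. split.
  - intros i hi E. destruct (Hs i hi) as [hsi HA]. rewrite HA in E.
    pose proof (HP (s i) hsi) as Hd.
    rewrite <- (Rmult_1_l (dist3 P _)), <- (Rinv_l c), Rmult_assoc, <- Hsim, E,
      dist3_refl, Rmult_0_r in Hd by lra. lra.
  - unfold vertex_power_sum, std_power_sum. rewrite scal_sum.
    set (h := fun j => Rpower (dist3 P (std_vertex j)) lam * Rpower c lam).
    rewrite (sum_eq _ (fun i => h (s i))).
    + apply (sum_f_R0_perm h s 11).
      * intros i hi. destruct (Hs i ltac:(lia)). lia.
      * intros i k hi hk E. apply Hinj; try lia.
        destruct (Hs i ltac:(lia)) as [_ e1], (Hs k ltac:(lia)) as [_ e2].
        rewrite e1, e2, E. reflexivity.
    + intros i hi. destruct (Hs i ltac:(lia)) as [hsi e1].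
      unfold h. rewrite e1, Hsim, Rmult_comm, <- Rpower_mult_distr; [reflexivity| |exact Hc].
      apply HP, hsi.
Qed.

Lemma phi_sq : phi * phi = phi + 1.
Proof. unfold phi. pose proof (sqrt_sqrt 5 ltac:(lra)). nra. Qed.

Lemma phi_bounds : 3/2 < phi < 2.
Proof.
  assert (H2 : 2 < sqrt 5).
  { rewrite <- (sqrt_pow2 2) by lra. apply sqrt_lt_1; lra. }
  assert (H3 : sqrt 5 < 3).
  { rewrite <- (sqrt_pow2 3) by lra. apply sqrt_lt_1; lra. }
  unfold phi. lra.
Qed.

Definition circum_sq : R := phi + 2.
Definition circumradius : R := sqrt circum_sq.

Lemma circumradius_facts : circumradius * circumradius = circum_sq /\ 1 < circumradius < 2.
Proof.
  pose proof phi_bounds. unfold circumradius, circum_sq.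
  pose proof (sqrt_sqrt (phi + 2) ltac:(lra)). pose proof (sqrt_pos (phi + 2)). split; nra.
Qed.

(** Two test points on the sphere of radius [w = t * circumradius]: the point
    [t * std_vertex 0] on the ray through a vertex, and the pole [(0, 0, w)]
    above the midpoint of an edge. *)
Definition ray_point (t : R) : point := mkpt 0 t (t * phi).
Definition pole_point (w : R) : point := mkpt 0 0 w.

(** For both test points the inner products with the 12 vertices take the
    nine values [inner_level t w k] (decreasing in [k]), so the squared
    distances take the nine values [level_dist_sq t w k].  The vertex [j]
    lies on level [ray_level j], resp. [pole_level j]. *)
Definition inner_level (t w : R) (k : nat) : R :=
  match k with
  | 0 => t * circum_sq | 1 => w * phi | 2 => w | 3 => t * phi | 4 => 0
  | 5 => - (t * phi) | 6 => - w | 7 => - (w * phi) | _ => - (t * circum_sq)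
  end.

Definition level_dist_sq (t w : R) (k : nat) : R :=
  t * t * circum_sq + circum_sq - 2 * inner_level t w k.

Definition ray_level (j : nat) : nat :=
  match j with
  | 0 => 0 | 1 => 5 | 2 => 3 | 3 => 8 | 4 => 3 | 5 => 5 | 6 => 3 | 7 => 5
  | 8 => 3 | 9 => 5 | 10 => 3 | _ => 5
  end.

Definition pole_level (j : nat) : nat :=
  match j with
  | 0 => 1 | 1 => 7 | 2 => 1 | 3 => 7 | 4 => 4 | 5 => 4 | 6 => 4 | 7 => 4
  | 8 => 2 | 9 => 6 | 10 => 2 | _ => 6
  end.

(** [level_weight k] = (number of vertices on level [k] for the ray point)
    minus (number for the pole point). *)
Definition level_weight (k : nat) : R :=
  match k with
  | 0 => 1 | 1 => -2 | 2 => -2 | 3 => 5 | 4 => -4 | 5 => 5 | 6 => -2 | 7 => -2 | _ => 1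
  end.

Lemma dist_ray_point t w j : w * w = circum_sq * (t * t) ->
  dist3 (ray_point t) (std_vertex j) = sqrt (level_dist_sq t w (ray_level j)).
Proof.
  intros Hw. pose proof phi_sq.
  unfold dist3, level_dist_sq, inner_level, circum_sq, ray_point, mkpt in *.
  destruct j as [|[|[|[|[|[|[|[|[|[|[|j]]]]]]]]]]]; simpl; f_equal; nsatz.
Qed.

Lemma dist_pole_point t w j : w * w = circum_sq * (t * t) ->
  dist3 (pole_point w) (std_vertex j) = sqrt (level_dist_sq t w (pole_level j)).
Proof.
  intros Hw. pose proof phi_sq.
  unfold dist3, level_dist_sq, inner_level, circum_sq, pole_point, mkpt in *.
  destruct j as [|[|[|[|[|[|[|[|[|[|[|j]]]]]]]]]]]; simpl; f_equal; nsatz.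
Qed.

(** The icosahedron is a spherical 5-design: the sums of [|M A_i|^(2j)],
    [j <= 5], agree at the two test points. *)
Lemma level_design_identity t w j : w * w = circum_sq * (t * t) -> (j <= 5)%nat ->
  sum_f_R0 (fun k => level_weight k * level_dist_sq t w k ^ j) 8 = 0.
Proof.
  intros Hw Hj. pose proof phi_sq.
  unfold level_dist_sq, inner_level, level_weight, circum_sq in *.
  destruct j as [|[|[|[|[|[|j]]]]]]; [..|lia]; clear Hj; simpl; nsatz.
Qed.

Lemma sign_changes_level_weight : sign_changes level_weight 8 = 6%nat.
Proof.
  unfold level_weight; simpl sign_changes.
  repeat match goal with
  | |- context [Rlt_dec ?a ?b] => destruct (Rlt_dec a b); try (exfalso; lra)
  end; reflexivity.
Qed.

Lemma sign_changes_level_weight_tail : sign_changes (fun k => level_weight (S k)) 7 = 5%nat.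
Proof.
  unfold level_weight; simpl sign_changes.
  repeat match goal with
  | |- context [Rlt_dec ?a ?b] => destruct (Rlt_dec a b); try (exfalso; lra)
  end; reflexivity.
Qed.

Section Levels.
Variables t w : R.
Hypothesis t_pos : 0 < t.
Hypothesis w_pos : 0 < w.
Hypothesis on_sphere : w * w = circum_sq * (t * t).

Lemma level_dist_sq_increasing : increasing_upto (level_dist_sq t w) 8.
Proof.
  pose proof phi_sq. destruct phi_bounds. unfold circum_sq in *.
  assert (Htt : 0 < t * t) by nra.
  assert (Hw_phi : w * phi < t * circum_sq).
  { unfold circum_sq.
    assert ((w * phi) * (w * phi) < (t * (phi + 2)) * (t * (phi + 2))).
    { replace ((w * phi) * (w * phi)) with ((w * w) * (phi * phi)) by ring.
      rewrite on_sphere, H.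
      assert (0 < t * t * (phi + 2)) by (apply Rmult_lt_0_compat; lra). lra. }
    assert (0 < w * phi) by (apply Rmult_lt_0_compat; lra).
    assert (0 < t * (phi + 2)) by (apply Rmult_lt_0_compat; lra). nra. }
  assert (Ht_phi : t * phi < w).
  { assert ((t * phi) * (t * phi) < w * w).
    { rewrite on_sphere. replace ((t * phi) * (t * phi)) with ((t * t) * (phi * phi)) by ring.
      rewrite H. nra. }
    assert (0 < t * phi) by (apply Rmult_lt_0_compat; lra). nra. }
  assert (0 < t * phi) by (apply Rmult_lt_0_compat; lra).
  assert (w < w * phi) by (rewrite <- (Rmult_1_r w) at 1; apply Rmult_lt_compat_l; lra).
  unfold circum_sq in Hw_phi.
  intros k hk. unfold level_dist_sq, inner_level, circum_sq.
  destruct k as [|[|[|[|[|[|[|[|k]]]]]]]]; try lia; lra.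
Qed.

Lemma level_dist_sq_pos k : (1 <= k <= 8)%nat -> 0 < level_dist_sq t w k.
Proof.
  assert (H1 : 0 < level_dist_sq t w 1).
  { pose proof phi_sq. pose proof phi_bounds.
    unfold level_dist_sq, inner_level, circum_sq in *. simpl.
    pose proof (Rle_0_sqr (w - phi)). unfold Rsqr in *. nra. }
  intros [hk1 hk8]. destruct (Nat.eq_dec k 1) as [->|]; [exact H1|].
  pose proof (increasing_upto_lt _ 8 level_dist_sq_increasing 1 k ltac:(lia) hk8). lra.
Qed.

End Levels.

Lemma level_dist_sq_0 t w : level_dist_sq t w 0 = circum_sq * (t - 1) * (t - 1).
Proof. unfold level_dist_sq, inner_level. ring. Qed.

Lemma Rpower_as_exp y l : Rpower y l = exp (ln y * l).
Proof. unfold Rpower. rewrite Rmult_comm. reflexivity. Qed.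

Lemma log_sqrt_increasing (f : nat -> R) n :
  (forall k, (k <= n)%nat -> 0 < f k) -> increasing_upto f n ->
  increasing_upto (fun k => ln (sqrt (f k))) n.
Proof.
  intros Hpos Hf k hk. apply ln_increasing.
  - apply sqrt_lt_R0, Hpos. lia.
  - apply sqrt_lt_1; [apply Rlt_le, Hpos; lia|apply Rlt_le, Hpos; lia|apply Hf, hk].
Qed.

Lemma exp_sum_log_sqrt_even (c f : nat -> R) n j :
  (forall k, (k <= n)%nat -> 0 < f k) ->
  exp_sum c (fun k => ln (sqrt (f k))) n (INR (2 * j)) = sum_f_R0 (fun k => c k * f k ^ j) n.
Proof.
  intros Hpos. apply sum_eq. intros k hk. f_equal.
  rewrite <- Rpower_as_exp, Rpower_pow by (apply sqrt_lt_R0, Hpos, hk).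
  rewrite pow_mult, pow2_sqrt by (apply Rlt_le, Hpos, hk). reflexivity.
Qed.

Definition level_exponent (t w : R) (k : nat) : R := ln (sqrt (level_dist_sq t w k)).

Lemma test_point_difference t w lam : w * w = circum_sq * (t * t) ->
  std_power_sum lam (ray_point t) - std_power_sum lam (pole_point w) =
  exp_sum level_weight (level_exponent t w) 8 lam.
Proof.
  intros Hw. unfold std_power_sum.
  rewrite (sum_eq _ (fun j => exp (level_exponent t w (ray_level j) * lam))),
    (sum_eq (fun j => Rpower _ lam) (fun j => exp (level_exponent t w (pole_level j) * lam))).
  - unfold exp_sum, level_weight. simpl. ring.
  - intros j _. rewrite Rpower_as_exp, (dist_pole_point t w j Hw). reflexivity.
  - intros j _. rewrite Rpower_as_exp, (dist_ray_point t w j Hw). reflexivity.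
Qed.

Definition even_upto_10 (lam : R) : Prop :=
  lam = 0 \/ lam = 2 \/ lam = 4 \/ lam = 6 \/ lam = 8 \/ lam = 10.

Lemma even_upto_10_index j : (j <= 5)%nat -> even_upto_10 (INR (2 * j)).
Proof.
  intros Hj. unfold even_upto_10.
  destruct j as [|[|[|[|[|[|j]]]]]]; [..|lia]; simpl;
    [left|right; left|do 2 right; left|do 3 right; left|do 4 right; left|do 5 right]; ring.
Qed.

Lemma level_dist_sq_all_pos t w : 0 < t -> 0 < w -> w * w = circum_sq * (t * t) -> t <> 1 ->
  forall k, (k <= 8)%nat -> 0 < level_dist_sq t w k.
Proof.
  intros Ht Hw Hsph Ht1 [|k] hk; [|apply level_dist_sq_pos; auto; lia].
  rewrite level_dist_sq_0. unfold circum_sq. pose proof phi_bounds.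
  assert (0 < (t - 1) * (t - 1)) by (apply Rsqr_pos_lt; lra). nra.
Qed.

Lemma level_difference_roots t w lam :
  0 < t -> 0 < w -> w * w = circum_sq * (t * t) -> t <> 1 ->
  exp_sum level_weight (level_exponent t w) 8 lam = 0 -> even_upto_10 lam.
Proof.
  intros Ht Hw Hsph Ht1 Hroot.
  pose proof (level_dist_sq_all_pos t w Ht Hw Hsph Ht1) as Hpos.
  destruct (exp_sum_roots_exhausted 8 level_weight (level_exponent t w) 5
              (fun j => INR (2 * j)) lam) as [j [Hj ->]].
  - apply log_sqrt_increasing; [exact Hpos|apply level_dist_sq_increasing; auto].
  - intros [|[|[|[|[|[|[|[|[|i]]]]]]]]] hi; unfold level_weight; lra.
  - exact sign_changes_level_weight.
  - intros j _. apply lt_INR. lia.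
  - intros j hj. unfold level_exponent.
    rewrite exp_sum_log_sqrt_even by exact Hpos. apply level_design_identity; auto.
  - exact Hroot.
  - apply even_upto_10_index, Hj.
Qed.

(** On the circumsphere ([t = 1]) the ray point is a vertex; dropping the
    level [k = 0] leaves a sum with five sign changes and roots [2, ..., 10]. *)
Lemma level_tail_roots lam :
  exp_sum (fun k => level_weight (S k)) (fun k => level_exponent 1 circumradius (S k)) 7 lam = 0 ->
  even_upto_10 lam.
Proof.
  intros Hroot. destruct circumradius_facts as [HR [HR1 HR2]].
  assert (Hsph : circumradius * circumradius = circum_sq * (1 * 1)) by lra.
  assert (Hpos : forall k, (k <= 7)%nat -> 0 < level_dist_sq 1 circumradius (S k))
    by (intros k hk; apply level_dist_sq_pos; auto; lra || lia).
  destruct (exp_sum_roots_exhausted 7 (fun k => level_weight (S k))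
              (fun k => level_exponent 1 circumradius (S k)) 4
              (fun j => INR (2 * S j)) lam) as [j [Hj ->]].
  - apply (log_sqrt_increasing (fun k => level_dist_sq 1 circumradius (S k))); [exact Hpos|].
    intros k hk. apply level_dist_sq_increasing; auto; lra || lia.
  - intros [|[|[|[|[|[|[|[|i]]]]]]]] hi; unfold level_weight; lra.
  - exact sign_changes_level_weight_tail.
  - intros j _. apply lt_INR. lia.
  - intros j hj. unfold level_exponent.
    rewrite (exp_sum_log_sqrt_even _ (fun k => level_dist_sq 1 circumradius (S k))) by exact Hpos.
    pose proof (level_design_identity 1 circumradius (S j) Hsph ltac:(lia)) as Hdesign.
    rewrite decomp_sum, level_dist_sq_0 in Hdesign by lia. simpl pred in Hdesign.
    rewrite <- Hdesign. simpl. ring.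
  - exact Hroot.
  - apply even_upto_10_index. lia.
Qed.

Lemma Rpower_near_0_small lam eps : 0 < lam -> 0 < eps ->
  forall y, 0 < y < Rpower eps (/ lam) -> Rpower y lam < eps.
Proof.
  intros Hl He y [Hy Hyd]. unfold Rpower in *.
  apply ln_increasing in Hyd; [|exact Hy]. rewrite ln_exp in Hyd.
  rewrite <- (exp_ln eps) by exact He. apply exp_increasing.
  apply (Rmult_lt_compat_l lam) in Hyd; [|exact Hl].
  replace (lam * (/ lam * ln eps)) with (ln eps) in Hyd by (field; lra). exact Hyd.
Qed.

Lemma Rpower_near_0_large lam M : lam < 0 -> 0 < M ->
  forall y, 0 < y < Rpower M (/ lam) -> M < Rpower y lam.
Proof.
  intros Hl HM y [Hy Hyd]. unfold Rpower in *.
  apply ln_increasing in Hyd; [|exact Hy]. rewrite ln_exp in Hyd.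
  rewrite <- (exp_ln M) by exact HM. apply exp_increasing.
  apply (Rmult_lt_gt_compat_neg_l lam) in Hyd; [|exact Hl].
  replace (lam * (/ lam * ln M)) with (ln M) in Hyd by (field; lra). exact Hyd.
Qed.

Lemma continuity_pt_0_eps (f : R -> R) : continuity_pt f 0 -> forall eps, 0 < eps ->
  exists eta, 0 < eta /\ forall e, Rabs e < eta -> Rabs (f e - f 0) < eps.
Proof.
  intros H eps Heps. destruct (H eps Heps) as [eta [Heta Hf]]. exists eta. split; [exact Heta|].
  intros e He. destruct (Req_dec e 0) as [->|hne].
  - rewrite Rminus_diag_eq, Rabs_R0 by reflexivity. exact Heps.
  - apply (Hf e). split; [split; [exact I|auto]|]. simpl. unfold R_dist. rewrite Rminus_0_r. exact He.
Qed.

Section PowerSingularity.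
Variables (d g : R -> R) (lam K : R).
Hypothesis d_pos : forall e, 0 < e < 1/2 -> 0 < d e.
Hypothesis d_small : forall delta eta, 0 < delta -> 0 < eta ->
  exists e, 0 < e < 1/2 /\ Rabs e < eta /\ d e < delta.
Hypothesis g_cont : continuity_pt g 0.
Hypothesis sum_const : forall e, 0 < e < 1/2 -> Rpower (d e) lam + g e = K.

Lemma singular_exponent_not_neg : ~ lam < 0.
Proof.
  intros Hl.
  destruct (continuity_pt_0_eps g g_cont 1 Rlt_0_1) as [eta [Heta Hg]].
  set (M := Rabs K + Rabs (g 0) + 1).
  assert (HM : 0 < M) by (unfold M; pose proof (Rabs_pos K); pose proof (Rabs_pos (g 0)); lra).
  assert (Hdelta : 0 < Rpower M (/ lam)) by apply exp_pos.
  destruct (d_small _ eta Hdelta Heta) as [e [He [Hae Hde]]].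
  pose proof (Rpower_near_0_large lam M Hl HM (d e) (conj (d_pos e He) Hde)) as Hbig.
  specialize (Hg e Hae). specialize (sum_const e He).
  pose proof (Rle_abs K). pose proof (Rle_abs (- g 0)). rewrite Rabs_Ropp in *.
  apply Rabs_def2 in Hg. unfold M in Hbig. lra.
Qed.

Lemma singular_limit : 0 < lam -> K = g 0.
Proof.
  intros Hl. apply cond_eq. intros eps Heps.
  destruct (continuity_pt_0_eps g g_cont (eps / 2) ltac:(lra)) as [eta [Heta Hg]].
  assert (Hdelta : 0 < Rpower (eps / 2) (/ lam)) by apply exp_pos.
  destruct (d_small _ eta Hdelta Heta) as [e [He [Hae Hde]]].
  pose proof (Rpower_near_0_small lam (eps / 2) Hl ltac:(lra) (d e) (conj (d_pos e He) Hde)).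
  assert (0 < Rpower (d e) lam) by apply exp_pos.
  specialize (Hg e Hae). apply Rabs_def2 in Hg. rewrite <- (sum_const e He).
  apply Rabs_def1; lra.
Qed.

End PowerSingularity.

Lemma dist3_origin_mkpt x y z r : 0 <= r -> x ^ 2 + y ^ 2 + z ^ 2 = r ^ 2 ->
  dist3 (mkpt x y z) origin = r.
Proof.
  intros Hr H. unfold dist3, mkpt, origin. rewrite !Rminus_0_r, H. apply sqrt_pow2, Hr.
Qed.

Lemma test_points_on_sphere t w : 0 < t -> 0 < w -> w * w = circum_sq * (t * t) ->
  dist3 (ray_point t) origin = w /\ dist3 (pole_point w) origin = w.
Proof.
  intros Ht Hw Hsph. pose proof phi_sq. unfold circum_sq in Hsph.
  split; apply dist3_origin_mkpt; try lra; nra.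
Qed.

Lemma pole_point_off_vertices t w : 0 < t -> 0 < w -> w * w = circum_sq * (t * t) ->
  off_vertices (pole_point w).
Proof.
  intros Ht Hw Hsph j hj. rewrite (dist_pole_point t w j Hsph).
  apply sqrt_lt_R0, level_dist_sq_pos; auto.
  destruct j as [|[|[|[|[|[|[|[|[|[|[|[|j]]]]]]]]]]]]; simpl; lia.
Qed.

Lemma ray_point_off_vertices t w : 0 < t -> 0 < w -> w * w = circum_sq * (t * t) -> t <> 1 ->
  off_vertices (ray_point t).
Proof.
  intros Ht Hw Hsph Ht1 j hj. rewrite (dist_ray_point t w j Hsph).
  apply sqrt_lt_R0, level_dist_sq_all_pos; auto.
  destruct j as [|[|[|[|[|[|[|[|[|[|[|[|j]]]]]]]]]]]]; simpl; lia.
Qed.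

Lemma generic_sphere_case w lam K : 0 < w -> w <> circumradius ->
  (forall P, dist3 P origin = w -> off_vertices P -> std_power_sum lam P = K) ->
  even_upto_10 lam.
Proof.
  intros Hw Hcirc Hconst. destruct circumradius_facts as [HR [HR1 HR2]].
  set (t := w / circumradius).
  assert (Ht : 0 < t) by (apply Rdiv_lt_0_compat; lra).
  assert (Hwt : w = t * circumradius) by (unfold t; field; lra).
  assert (Hsph : w * w = circum_sq * (t * t)) by (rewrite Hwt, <- HR; ring).
  assert (Ht1 : t <> 1) by (intro E; apply Hcirc; rewrite Hwt, E; ring).
  destruct (test_points_on_sphere t w Ht Hw Hsph) as [Hray Hpole].
  apply (level_difference_roots t w lam Ht Hw Hsph Ht1).
  rewrite <- (test_point_difference t w lam Hsph).
  rewrite (Hconst _ Hray (ray_point_off_vertices t w Ht Hw Hsph Ht1)),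
    (Hconst _ Hpole (pole_point_off_vertices t w Ht Hw Hsph)). ring.
Qed.

Definition circum_path (e : R) : point := mkpt (circumradius * sin e) (cos e) (phi * cos e).

Lemma circum_path_on_sphere e : dist3 (circum_path e) origin = circumradius.
Proof.
  destruct circumradius_facts as [HR [HR1 HR2]]. pose proof phi_sq. pose proof (sin2_cos2 e).
  unfold Rsqr, circum_sq in *. apply dist3_origin_mkpt; [lra|nra].
Qed.

(** For [0 < e < 1/2] the first coordinate of the path lies strictly between
    [0] and [1], unlike that of any vertex. *)
Lemma circum_path_off_vertices e : 0 < e < 1/2 -> off_vertices (circum_path e).
Proof.
  intros He j hj. destruct circumradius_facts as [HR [HR1 HR2]]. pose proof phi_bounds.
  assert (Hs : 0 < sin e) by (apply sin_gt_0; [lra| pose proof PI2_1; lra]).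
  assert (Hs2 : sin e < e) by (apply sin_lt_x; lra).
  assert (Hx : 0 < circumradius * sin e < 1) by (split; nra).
  unfold dist3, circum_path, mkpt.
  destruct j as [|[|[|[|[|[|[|[|[|[|[|[|j]]]]]]]]]]]]; try lia; simpl; apply sqrt_lt_R0;
  match goal with |- 0 < (?a - ?b) * _ + ?r1 * _ + ?r2 * _ =>
    assert (a - b <> 0) by lra; assert (0 < (a - b) * (a - b)) by (apply Rsqr_pos_lt; auto);
    assert (0 <= r1 * r1) by apply Rle_0_sqr; assert (0 <= r2 * r2) by apply Rle_0_sqr end; nra.
Qed.

Lemma circum_path_near_vertex delta eta : 0 < delta -> 0 < eta ->
  exists e, 0 < e < 1/2 /\ Rabs e < eta /\ dist3 (circum_path e) (std_vertex 0) < delta.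
Proof.
  intros Hd He.
  set (q := fun e => (circumradius * sin e - 0) ^ 2 + (cos e - 1) ^ 2 + (phi * cos e - phi) ^ 2).
  assert (Hq : continuity_pt q 0)
    by (apply derivable_continuous_pt, ex_derive_Reals_0; unfold q; auto_derive; auto).
  destruct (continuity_pt_0_eps q Hq (delta * delta)) as [e2 [He2 Hclose]]; [nra|].
  set (e := Rmin (Rmin eta e2) (1/2) / 2).
  pose proof (Rmin_l (Rmin eta e2) (1/2)). pose proof (Rmin_r (Rmin eta e2) (1/2)).
  pose proof (Rmin_l eta e2). pose proof (Rmin_r eta e2).
  assert (0 < Rmin (Rmin eta e2) (1/2)) by (repeat apply Rmin_glb_lt; lra).
  assert (Hpos : 0 < e) by (unfold e; lra).
  exists e. rewrite Rabs_pos_eq by lra. split; [unfold e; lra|split; [unfold e; lra|]].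
  specialize (Hclose e ltac:(rewrite Rabs_pos_eq by lra; unfold e; lra)).
  assert (Hq0 : q 0 = 0) by (unfold q; rewrite sin_0, cos_0; ring).
  assert (0 <= q e) by (unfold q; repeat apply Rplus_le_le_0_compat; apply pow2_ge_0).
  rewrite Hq0, Rminus_0_r, Rabs_pos_eq in Hclose by lra.
  change (sqrt (q e) < delta). rewrite <- (sqrt_pow2 delta) by lra.
  apply sqrt_lt_1; [lra|apply pow2_ge_0|]. simpl. lra.
Qed.

Definition far_vertices_sum (lam e : R) : R :=
  sum_f_R0 (fun j => Rpower (dist3 (circum_path e) (std_vertex (S j))) lam) 10.

Lemma std_power_sum_split lam e : std_power_sum lam (circum_path e) =
  Rpower (dist3 (circum_path e) (std_vertex 0)) lam + far_vertices_sum lam e.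
Proof. unfold std_power_sum, far_vertices_sum. rewrite decomp_sum by lia. reflexivity. Qed.

Lemma sum_continuity_pt (f : nat -> R -> R) n x :
  (forall j, (j <= n)%nat -> continuity_pt (f j) x) ->
  continuity_pt (fun e => sum_f_R0 (fun j => f j e) n) x.
Proof.
  induction n as [|n IH]; intros H; simpl; [apply H; lia|].
  apply (continuity_pt_plus (fun e => sum_f_R0 (fun j => f j e) n) (f (S n))).
  - apply IH. intros j hj. apply H. lia.
  - apply H. lia.
Qed.

Lemma far_vertices_sum_continuous lam : continuity_pt (far_vertices_sum lam) 0.
Proof.
  apply (sum_continuity_pt (fun j e => Rpower (dist3 (circum_path e) (std_vertex (S j))) lam)).
  intros j hj. destruct circumradius_facts as [HR [HR1 HR2]]. pose proof phi_bounds.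
  apply derivable_continuous_pt, ex_derive_Reals_0.
  unfold dist3, circum_path, mkpt.
  destruct j as [|[|[|[|[|[|[|[|[|[|[|j]]]]]]]]]]]; try lia; cbv beta iota delta [std_vertex mkpt];
  unfold Rpower; auto_derive; rewrite ?sin_0, ?cos_0; repeat split; try nra;
  apply sqrt_lt_R0; nra.
Qed.

Lemma far_sum_pole_difference lam :
  far_vertices_sum lam 0 - std_power_sum lam (pole_point circumradius) =
  exp_sum (fun k => level_weight (S k)) (fun k => level_exponent 1 circumradius (S k)) 7 lam.
Proof.
  destruct circumradius_facts as [HR _].
  assert (Hsph : circumradius * circumradius = circum_sq * (1 * 1)) by lra.
  assert (Hpath0 : circum_path 0 = ray_point 1).
  { unfold circum_path, ray_point. rewrite sin_0, cos_0. f_equal; [f_equal|]; ring. }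
  unfold far_vertices_sum, std_power_sum. rewrite Hpath0.
  rewrite (sum_eq _ (fun j => exp (level_exponent 1 circumradius (ray_level (S j)) * lam))),
    (sum_eq (fun j => Rpower _ lam)
       (fun j => exp (level_exponent 1 circumradius (pole_level j) * lam))).
  - unfold exp_sum, level_weight. simpl. ring.
  - intros j _. rewrite Rpower_as_exp, (dist_pole_point 1 circumradius j Hsph). reflexivity.
  - intros j _. rewrite Rpower_as_exp, (dist_ray_point 1 circumradius (S j) Hsph). reflexivity.
Qed.

Lemma circumsphere_case lam K :
  (forall P, dist3 P origin = circumradius -> off_vertices P -> std_power_sum lam P = K) ->
  even_upto_10 lam.
Proof.
  intros Hconst. destruct circumradius_facts as [HR [HR1 HR2]].
  assert (Hsph : circumradius * circumradius = circum_sq * (1 * 1)) by lra.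
  assert (Hpath : forall e, 0 < e < 1/2 ->
    Rpower (dist3 (circum_path e) (std_vertex 0)) lam + far_vertices_sum lam e = K).
  { intros e He. rewrite <- std_power_sum_split.
    apply Hconst; [apply circum_path_on_sphere|apply circum_path_off_vertices, He]. }
  assert (Hdist : forall e, 0 < e < 1/2 -> 0 < dist3 (circum_path e) (std_vertex 0))
    by (intros e He; apply circum_path_off_vertices; [exact He|lia]).
  destruct (Rtotal_order lam 0) as [Hneg|[Hzero|Hpos]].
  - exfalso. exact (singular_exponent_not_neg _ _ lam K Hdist circum_path_near_vertex
                      (far_vertices_sum_continuous lam) Hpath Hneg).
  - left. exact Hzero.
  - pose proof (singular_limit _ _ lam K Hdist circum_path_near_vertex
                  (far_vertices_sum_continuous lam) Hpath Hpos) as HK.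
    apply level_tail_roots. rewrite <- far_sum_pole_difference, <- HK.
    rewrite (Hconst (pole_point circumradius)); [ring| |].
    + apply (test_points_on_sphere 1 circumradius); lra.
    + apply (pole_point_off_vertices 1); lra.
Qed.

Theorem proposition5p2 (A : nat -> point) (O : point) (r lam : R) :
  regular_icosahedron A O ->
  0 < r ->
  (exists K : R, forall M : point,
      dist3 M O = r ->
      (forall i, (i < 12)%nat -> M <> A i) ->
      vertex_power_sum A lam M = K) ->
  lam = 0 \/ lam = 2 \/ lam = 4 \/ lam = 6 \/ lam = 8 \/ lam = 10.
Proof.
  intros Hico Hr [K HK].
  destruct (reduce_to_standard A O Hico) as [T [c [Hc [Hsim [HO Hred]]]]].
  set (w := r / c).
  assert (Hw : 0 < w) by (apply Rdiv_lt_0_compat; assumption).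
  assert (Hconst : forall P, dist3 P origin = w -> off_vertices P ->
                     std_power_sum lam P = K / Rpower c lam).
  { intros P HP Hoff. destruct (Hred P lam Hoff) as [Hne Hsum].
    assert (Hcl : 0 < Rpower c lam) by apply exp_pos.
    rewrite <- (HK (T P)), Hsum; [field; lra| |exact Hne].
    rewrite <- HO, Hsim, HP. unfold w. field. lra. }
  destruct (Req_dec w circumradius) as [Hcirc|Hgen].
  - rewrite Hcirc in Hconst. exact (circumsphere_case lam _ Hconst).
  - exact (generic_sphere_case w lam _ Hw Hgen Hconst).
Qed.
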